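(* Let $(\mathcal{E},\mathcal{L},\mathcal{B})$ be a weakly left resolving labelled space with associated inverse semigroup $S$. The maps \[(\alpha,\{\mathcal{F}_n\}_{n\ge0})\mapsto \bigcup_{n\ge0}\bigcup_{A\in\mathcal{F}_n}\uparrow(\alpha_{1,n},A,\alpha_{1,n})\] and $\xi\mapsto(\alpha,\{\xi_n\}_{n\ge0})$, where $\alpha\in\mathcal{L}^\infty$ is the infinite word of $\xi$ and $\xi_n=\{A\in\mathcal{B}:(\alpha_{1,n},A,\alpha_{1,n})\in\xi\}$, are mutually inverse bijections between the set of pairs $(\alpha,\{\mathcal{F}_n\}_{n\ge0})$ with $\alpha\in\mathcal{L}^\infty$ and $\{\mathcal{F}_n\}_{n\ge0}$ a complete family for $\alpha$, and the set of filters in $E(S)$ of infinite type.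
   Context: A directed graph $\mathcal{E}=(\mathcal{E}^0,\mathcal{E}^1,r,s)$ has countable nonempty vertex set, edge set, range/source maps; paths satisfy $r(\lambda_i)=s(\lambda_{i+1})$. A labelled graph has a surjective labelling $\mathcal{L}:\mathcal{E}^1\to\mathcal{A}$ extended letterwise to finite and infinite paths. $\omega$ is the empty word, $\mathcal{L}^+=\bigcup_{n\ge1}\mathcal{L}(\mathcal{E}^n)$, $\mathcal{L}^*=\{\omega\}\cup\mathcal{L}^+$, $\mathcal{L}^\infty$ the labels of infinite paths; $\alpha_{i,j}=\alpha_i\cdots\alpha_j$, $\alpha_{1,0}=\omega$. For $A\subseteq\mathcal{E}^0$, $\alpha\in\mathcal{L}^+$: $r(A,\alpha)=\{r(\lambda):\mathcal{L}(\lambda)=\alpha,\ s(\lambda)\in A\}$, $r(A,\omega)=A$, $r(\alpha)=r(\mathcal{E}^0,\alpha)$. $\mathcal{B}$ accommodating: closed under $r(\cdot,\alpha)$, finite intersections and unions, contains $r(\alpha)$ for $\alpha\in\mathcal{L}^+$; labelled space weakly left resolving if $r(A\cap B,\alpha)=r(A,\alpha)\cap r(B,\alpha)$ for $A,B\in\mathcal{B}$, $\alpha\in\mathcal{L}^+$. $\mathcal{B}_\alpha=\mathcal{B}\cap\mathcal{P}(r(\alpha))$. $S$ = triples $(\alpha,A,\beta)$, $\alpha,\beta\in\mathcal{L}^*$, $\emptyset\ne A\in\mathcal{B}_\alpha\cap\mathcal{B}_\beta$, plus $0$; product $(\alpha,A,\beta)(\gamma,B,\delta)=(\alpha\gamma',r(A,\gamma')\cap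 B,\delta)$ if $\gamma=\beta\gamma'$, $=(\alpha,A\cap r(B,\beta'),\delta\beta')$ if $\beta=\gamma\beta'$, $=0$ otherwise (empty middle entry identified with $0$). $E(S)=\{(\alpha,A,\alpha)\}\cup\{0\}$, $p\le q$ iff $pq=p$; $(\alpha,A,\alpha)\le(\beta,B,\beta)$ iff $\alpha=\beta\alpha'$ and $A\subseteq r(B,\alpha')$; $\uparrow x=\{y:x\le y\}$. A filter in a poset with least element $0$ is a nonempty upward-closed subset not containing $0$ in which any two elements have a common lower bound in it. The words of any two elements of a filter $\xi$ in $E(S)$ are comparable; $\xi$ is of infinite type if there is no longest word among the words $\beta$ with $(\beta,B,\beta)\in\xi$; then there is a unique $\alpha\in\mathcal{L}^\infty$ (the word of $\xi$) with every element of $\xi$ of the form $(\alpha_{1,n},A,\alpha_{1,n})$. A family $\{\mathcal{F}_n\}_{n\ge0}$ with $\mathcal{F}_n$ a filter in $\mathcal{B}_{\alpha_{1,n}}$ (under inclusion) for $n>0$ and $\mathcal{F}_0$ a filter in $\mathcal{B}$ or empty is complete for $\alpha$ if $\mathcal{F}_n=\{A\in\mathcal{B}_{\alpha_{1,n}}:r(A,\alpha_{n+1})\in\mathcal{F}_{n+1}\}$ for all $n\ge0$.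
   Formalization: The filters of infinite type in the bijection are only those ξ for which some α ∈ $\mathcal{L}^\infty$ has every element of ξ of the form $(\alpha_{1,n},A,\alpha_{1,n})$, and this α is taken as the word of ξ. Apart from conventions, each condition added here is assumed in the paper as well or is needed for the statement above to hold. *)

From Stdlib Require Import List Arith.
Import ListNotations.
Unset Implicit Arguments.

Record LGraph := {
  V : Type; Ed : Type; Al : Type;
  rg : Ed -> V; src : Ed -> V; lab : Ed -> Al }.

Definition vset (G : LGraph) := V G -> Prop.
Definition subset {X} (A C : X -> Prop) := forall x, A x -> C x.

Fixpoint is_path (G : LGraph) (p : list (Ed G)) : Prop :=
  match p with
  | [] => True
  | e :: q => match q with
              | [] => True
              | f :: _ => rg G e = src G f /\ is_path G q
              end
  end.

Definition is_inf_path (G : LGraph) (f : nat -> Ed G) : Prop :=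
  forall n, rg G (f n) = src G (f (S n)).

(* L^+ , L^* , L^infty ; infinite words are functions nat -> Al, alpha_{i+1} = alpha i *)
Definition Lplus (G : LGraph) (w : list (Al G)) : Prop :=
  exists e p, is_path G (e :: p) /\ map (lab G) (e :: p) = w.
Definition Lstar (G : LGraph) (w : list (Al G)) : Prop := w = [] \/ Lplus G w.
Definition Linf (G : LGraph) (a : nat -> Al G) : Prop :=
  exists f, is_inf_path G f /\ forall n, lab G (f n) = a n.

Definition pref {X} (a : nat -> X) (n : nat) : list X := map a (seq 0 n).

Definition relrange (G : LGraph) (A : vset G) (w : list (Al G)) : vset G :=
  match w with
  | [] => A
  | _ => fun v => exists e p, is_path G (e :: p) /\ map (lab G) (e :: p) = w
                              /\ A (src G e) /\ rg G (last p e) = v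
  end.

Definition rword (G : LGraph) (w : list (Al G)) : vset G := relrange G (fun _ => True) w.

Definition accommodating (G : LGraph) (B : vset G -> Prop) : Prop :=
  (forall A w, B A -> Lplus G w -> B (relrange G A w)) /\
  (forall A C, B A -> B C -> B (fun v => A v /\ C v)) /\
  (forall A C, B A -> B C -> B (fun v => A v \/ C v)) /\
  (forall w, Lplus G w -> B (rword G w)).

Definition weakly_left_resolving (G : LGraph) (B : vset G -> Prop) : Prop :=
  forall A C w, B A -> B C -> Lplus G w ->
    forall v, relrange G (fun x => A x /\ C x) w v <->
              (relrange G A w v /\ relrange G C w v).

Definition Bw (G : LGraph) (B : vset G -> Prop) (w : list (Al G)) (A : vset G) : Prop :=
  B A /\ subset A (rword G w).

Definition is_filter {X} (P : X -> Prop) (le : X -> X -> Prop) (zero : X -> Prop)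
  (F : X -> Prop) : Prop :=
  (exists x, F x) /\
  (forall x, F x -> P x) /\
  (forall x, F x -> ~ zero x) /\
  (forall x y, F x -> P y -> le x y -> F y) /\
  (forall x y, F x -> F y -> exists z, F z /\ le z x /\ le z y).

Definition filter_in_Bw (G : LGraph) (B : vset G -> Prop) (w : list (Al G))
  (F : vset G -> Prop) : Prop :=
  is_filter (Bw G B w) (@subset (V G)) (fun A => forall v, ~ A v) F.

(* E(S): None is 0, Some (alpha, A) is the idempotent (alpha, A, alpha) *)
Definition ES (G : LGraph) := option (list (Al G) * vset G).

Definition inES (G : LGraph) (B : vset G -> Prop) (x : ES G) : Prop :=
  match x with
  | None => True
  | Some (a, A) => Lstar G a /\ (exists v, A v) /\ Bw G B a A
  end.

Definition leES (G : LGraph) (x y : ES G) : Prop :=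
  match x, y with
  | None, _ => True
  | Some _, None => False
  | Some (a, A), Some (b, C) => exists a', a = b ++ a' /\ subset A (relrange G C a')
  end.

Definition filter_ES (G : LGraph) (B : vset G -> Prop) (xi : ES G -> Prop) : Prop :=
  is_filter (inES G B) (@leES G) (fun x => x = None) xi.

Definition upES (G : LGraph) (B : vset G -> Prop) (x : ES G) (y : ES G) : Prop :=
  inES G B y /\ leES G x y.

Definition infinite_type (G : LGraph) (xi : ES G -> Prop) : Prop :=
  forall b C, xi (Some (b, C)) ->
    exists c D, xi (Some (c, D)) /\ length b < length c.

Definition word_of (G : LGraph) (xi : ES G -> Prop) (a : nat -> Al G) : Prop :=
  Linf G a /\ forall x, xi x -> exists n A, x = Some (pref a n, A).

Definition complete_family (G : LGraph) (B : vset G -> Prop) (a : nat -> Al G)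
  (F : nat -> vset G -> Prop) : Prop :=
  (filter_in_Bw G B [] (F 0) \/ (forall A, ~ F 0 A)) /\
  (forall n, 0 < n -> filter_in_Bw G B (pref a n) (F n)) /\
  (forall n A, F n A <-> (Bw G B (pref a n) A /\ F (S n) (relrange G A [a n]))).

Definition Phi (G : LGraph) (B : vset G -> Prop) (a : nat -> Al G)
  (F : nat -> vset G -> Prop) : ES G -> Prop :=
  fun x => exists n A, F n A /\ upES G B (Some (pref a n, A)) x.

Definition xi_n (G : LGraph) (B : vset G -> Prop) (xi : ES G -> Prop) (a : nat -> Al G)
  : nat -> vset G -> Prop :=
  fun n A => B A /\ xi (Some (pref a n, A)).

Definition countable (X : Type) : Prop :=
  exists f : X -> nat, forall x y, f x = f y -> x = y.

(* A generator (alpha_{1,n}, A, alpha_{1,n}) of Phi lies above its pushforward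
   (alpha_{1,n+k}, r(A, alpha_{n+1,n+k}), alpha_{1,n+k}); completeness of {F_n} says that
   pushing forward along the word maps F_n into F_{n+k} and reflects membership, so any two
   generators have a common lower bound in Phi and the level-n slice of Phi is exactly F_n.
   Conversely, infinite type provides elements of xi at arbitrarily deep levels; a common
   lower bound with such an element pushes a level-n element of xi to level n+1, and weak
   left resolvingness keeps every level closed under intersection, so the slices xi_n form
   a complete family, and xi, being upward closed, is regenerated by them. *)

From Stdlib Require Import List Arith Lia Classical.
Import ListNotations.

Lemma last_cons_default {X} (p : list X) (e f : X) : last (f :: p) e = last p f.
Proof.
  revert e f; induction p as [|x p IH]; intros e f; [reflexivity|].
  change (last (x :: p) e = last (x :: p) f). rewrite !IH. reflexivity.
Qed.

Section RelativeRange.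
Variable G : LGraph.

Definition step_range (A : vset G) (x : Al G) : vset G :=
  fun v => exists e, lab G e = x /\ A (src G e) /\ rg G e = v.

(* [relrange] computed one letter at a time, so that ranges compose by [fold_left_app] *)
Definition reach (A : vset G) (w : list (Al G)) : vset G := fold_left step_range w A.

Lemma relrange_cons_reach w : forall x (A : vset G) v,
  relrange G A (x :: w) v <-> reach A (x :: w) v.
Proof.
  induction w as [|y w IH]; intros x A v; simpl.
  - split.
    + intros [e [[|f p] [_ [Hm [HA Hr]]]]]; inversion Hm; subst. exists e; auto.
    + intros [e [He [HA Hr]]]. exists e, []. simpl. subst. auto.
  - rewrite <- (IH y (step_range A x) v). simpl. split.
    + intros [e [[|f p] [Hp [Hm [HA Hr]]]]]; [discriminate|].
      injection Hm as Hx Hy Hw. destruct Hp as [Hef Hp].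
      rewrite last_cons_default in Hr. exists f, p.
      split; [exact Hp|]. split; [simpl; rewrite Hy, Hw; reflexivity|].
      split; [exists e; auto | exact Hr].
    + intros [f [p [Hp [Hm [[e [He [HA Hr']]] Hr]]]]].
      exists e, (f :: p). rewrite last_cons_default. simpl in Hm |- *.
      rewrite He, Hm. auto.
Qed.

Lemma relrange_reach (A : vset G) w v : relrange G A w v <-> reach A w v.
Proof. destruct w as [|x w]; [simpl; tauto | apply relrange_cons_reach]. Qed.

Lemma reach_mono w : forall A C : vset G, subset A C -> subset (reach A w) (reach C w).
Proof.
  induction w as [|x w IH]; intros A C H; simpl; [exact H|].
  apply IH. intros v [e [He [HA Hr]]]. exists e; auto.
Qed.

Lemma reach_inhabited w : forall (A : vset G) v, reach A w v -> exists x, A x.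
Proof.
  induction w as [|x w IH]; intros A v H; [eauto|].
  destruct (IH _ _ H) as [y [e [_ [HA _]]]]. eauto.
Qed.

Lemma relrange_mono w (A C : vset G) :
  subset A C -> subset (relrange G A w) (relrange G C w).
Proof.
  intros H v. rewrite !relrange_reach. apply reach_mono, H.
Qed.

Lemma relrange_app (A : vset G) u w v :
  relrange G (relrange G A u) w v <-> relrange G A (u ++ w) v.
Proof.
  rewrite !relrange_reach. unfold reach at 2. rewrite fold_left_app.
  split; apply reach_mono; intros y; apply relrange_reach.
Qed.

Lemma relrange_inhabited (A : vset G) w v : relrange G A w v -> exists x, A x.
Proof. rewrite relrange_reach. apply reach_inhabited. Qed.

Lemma relrange_sub_rword (A : vset G) u w :
  subset A (rword G u) -> subset (relrange G A w) (rword G (u ++ w)).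
Proof.
  intros HA v Hv. apply relrange_app. eapply relrange_mono; eauto.
Qed.

End RelativeRange.

Definition segment {X} (a : nat -> X) (n k : nat) : list X := map a (seq n k).

Lemma segment_add {X} (a : nat -> X) n k m :
  segment a n (k + m) = segment a n k ++ segment a (n + k) m.
Proof. unfold segment. rewrite seq_app, map_app. reflexivity. Qed.

Lemma pref_add {X} (a : nat -> X) n k : pref a (n + k) = pref a n ++ segment a n k.
Proof. exact (segment_add a 0 n k). Qed.

Lemma segment_length {X} (a : nat -> X) n k : length (segment a n k) = k.
Proof. unfold segment. rewrite length_map, length_seq. reflexivity. Qed.

Lemma pref_length {X} (a : nat -> X) n : length (pref a n) = n.
Proof. exact (segment_length a 0 n). Qed.

Lemma pref_eq_app {X} (a : nat -> X) m n w :
  pref a m = pref a n ++ w -> exists k, m = n + k /\ w = segment a n k.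
Proof.
  intros H. assert (Hm : m = n + length w).
  { apply (f_equal (@length X)) in H. rewrite length_app, !pref_length in H. exact H. }
  exists (length w). split; [exact Hm|]. subst m. rewrite pref_add in H.
  symmetry. eapply app_inv_head, H.
Qed.

Lemma pref_eq_app_prefix {X} (a : nat -> X) n b w :
  pref a n = b ++ w -> b = pref a (length b).
Proof.
  intros H. assert (Hb : length b <= n).
  { apply (f_equal (@length X)) in H. rewrite length_app, pref_length in H. lia. }
  replace n with (length b + (n - length b)) in H by lia.
  rewrite pref_add in H.
  assert (E := firstn_app_2 0 b w). rewrite <- H in E.
  rewrite <- (pref_length a (length b)) in E at 1. rewrite firstn_app_2 in E.
  simpl in E. rewrite !app_nil_r in E. symmetry. exact E.
Qed.

Section InfiniteWord.
Variables (G : LGraph) (B : vset G -> Prop) (a : nat -> Al G).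
Hypotheses (Ha : Linf G a) (Hacc : accommodating G B).

Lemma is_path_map_seq f : is_inf_path G f -> forall k n, is_path G (map f (seq n k)).
Proof.
  intros Hf k. induction k as [|[|k] IH]; intros n; try exact I.
  split; [apply Hf | apply (IH (S n))].
Qed.

Lemma Lplus_segment n k : Lplus G (segment a n (S k)).
Proof.
  destruct Ha as [f [Hf Hl]]. exists (f n), (map f (seq (S n) k)).
  split; [exact (is_path_map_seq f Hf (S k) n)|].
  change (map (lab G) (map f (seq n (S k))) = segment a n (S k)).
  rewrite map_map. apply map_ext. exact Hl.
Qed.

Lemma Lstar_pref n : Lstar G (pref a n).
Proof. destruct n; [left; reflexivity | right; apply (Lplus_segment 0)]. Qed.

Lemma B_relrange_segment (A : vset G) n k : B A -> B (relrange G A (segment a n k)).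
Proof. intros HA. destruct k; [exact HA | apply Hacc; [exact HA | apply Lplus_segment]]. Qed.

Lemma Bw_relrange_segment (A : vset G) n k :
  Bw G B (pref a n) A -> Bw G B (pref a (n + k)) (relrange G A (segment a n k)).
Proof.
  intros [HB Hs]. split; [apply B_relrange_segment, HB|].
  rewrite pref_add. apply relrange_sub_rword, Hs.
Qed.

Lemma Bw_relrange_letter (A : vset G) n :
  Bw G B (pref a n) A -> Bw G B (pref a (S n)) (relrange G A [a n]).
Proof. rewrite <- Nat.add_1_r. apply Bw_relrange_segment. Qed.

Lemma inES_pref n (A : vset G) :
  Bw G B (pref a n) A -> (exists v, A v) -> inES G B (Some (pref a n, A)).
Proof. intros HBw HA. split; [apply Lstar_pref | auto]. Qed.

End InfiniteWord.

Lemma leES_trans (G : LGraph) (x y z : ES G) : leES G x y -> leES G y z -> leES G x z.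
Proof.
  destruct x as [[a A]|], y as [[b C]|], z as [[c D]|]; simpl; tauto || intros [u [Eu Su]] [w [Ew Sw]].
  exists (w ++ u). split; [subst; symmetry; apply app_assoc|].
  intros v Hv. apply relrange_app. eapply relrange_mono; [exact Sw | auto].
Qed.

Lemma leES_refl (G : LGraph) w (A : vset G) : leES G (Some (w, A)) (Some (w, A)).
Proof. exists []. rewrite app_nil_r. split; [reflexivity | intros v Hv; exact Hv]. Qed.

Lemma leES_pref_segment (G : LGraph) (a : nat -> Al G) n k (A D : vset G) :
  subset D (relrange G A (segment a n k)) ->
  leES G (Some (pref a (n + k), D)) (Some (pref a n, A)).
Proof. intros HD. exists (segment a n k). split; [apply pref_add | exact HD]. Qed.

Section CompleteFamily.
Variables (G : LGraph) (B : vset G -> Prop) (a : nat -> Al G) (F : nat -> vset G -> Prop).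
Hypotheses (Ha : Linf G a) (Hacc : accommodating G B) (HF : complete_family G B a F).

Lemma complete_family_filter m (A : vset G) : F m A -> filter_in_Bw G B (pref a m) (F m).
Proof.
  intros HA. destruct m as [|m].
  - destruct HF as [[H0 | H0] _]; [exact H0 | destruct (H0 A HA)].
  - apply HF. lia.
Qed.

Lemma complete_family_Bw m (A : vset G) : F m A -> Bw G B (pref a m) A.
Proof. intros HA. apply (complete_family_filter m A HA), HA. Qed.

Lemma complete_family_inhabited m (A : vset G) : F m A -> exists v, A v.
Proof.
  intros HA. apply not_all_not_ex, (complete_family_filter m A HA), HA.
Qed.

Lemma complete_family_up m (A C : vset G) :
  F m A -> subset A C -> Bw G B (pref a m) C -> F m C.
Proof. intros HA HAC HC. eapply (complete_family_filter m A HA); eauto. Qed.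

Lemma complete_family_forward n (A : vset G) k :
  F n A -> F (n + k) (relrange G A (segment a n k)).
Proof.
  intros HA. induction k as [|k IH].
  - rewrite Nat.add_0_r. exact HA.
  - apply HF in IH. destruct IH as [_ IH]. rewrite Nat.add_succ_r.
    eapply complete_family_up; [exact IH | |].
    + intros v Hv. apply relrange_app in Hv.
      rewrite <- Nat.add_1_r, segment_add. exact Hv.
    + rewrite <- Nat.add_succ_r. apply Bw_relrange_segment; auto.
      eapply complete_family_Bw; eauto.
Qed.

Lemma complete_family_backward k : forall n (A : vset G),
  F (n + k) (relrange G A (segment a n k)) -> Bw G B (pref a n) A -> F n A.
Proof.
  induction k as [|k IH]; intros n A H HBw.
  - rewrite Nat.add_0_r in H. exact H.
  - apply HF. split; [exact HBw|].
    assert (H1 := Bw_relrange_letter G B a Ha Hacc A n HBw).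
    apply IH; [|exact H1].
    rewrite Nat.add_succ_r in H. eapply complete_family_up; [exact H | |].
    + intros v Hv. apply relrange_app, Hv.
    + apply Bw_relrange_segment; auto.
Qed.

Lemma Phi_pref n (A : vset G) : F n A -> Phi G B a F (Some (pref a n, A)).
Proof.
  intros HA. exists n, A. split; [exact HA|]. split; [|apply leES_refl].
  apply inES_pref; [exact Ha | eapply complete_family_Bw | eapply complete_family_inhabited];
    eauto.
Qed.

Lemma Phi_is_filter : filter_ES G B (Phi G B a F).
Proof.
  split; [|split; [|split; [|split]]].
  - assert (HF1 : filter_in_Bw G B (pref a 1) (F 1)) by (apply HF; lia).
    destruct HF1 as [[A HA] _]. eexists. apply (Phi_pref 1), HA.
  - intros x [n [A [_ [H _]]]]. exact H.
  - intros x [n [A [_ [_ H]]]] ->. exact H.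
  - intros x y [n [A [HA [_ Hx]]]] Hy Hxy. exists n, A.
    split; [exact HA|]. split; [exact Hy | eapply leES_trans; eauto].
  - (* generators at levels n and m both lie above the meet, in F (n + S m), of their
       pushforwards to that common level *)
    intros x y [n [A [HA [_ Hx]]]] [m [C [HC [_ Hy]]]].
    assert (H1 := complete_family_forward n A (S m) HA).
    assert (H2 := complete_family_forward m C (S n) HC).
    replace (m + S n) with (n + S m) in H2 by lia.
    destruct (complete_family_filter _ _ H1) as [_ [_ [_ [_ Hmeet]]]].
    destruct (Hmeet _ _ H1 H2) as [D [HD [HDA HDC]]].
    exists (Some (pref a (n + S m), D)). split; [apply Phi_pref, HD|].
    split; eapply leES_trans; [| exact Hx | | exact Hy].
    + apply leES_pref_segment, HDA.
    + replace (n + S m) with (m + S n) by lia. apply leES_pref_segment, HDC.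
Qed.

Lemma Phi_infinite_type : infinite_type G (Phi G B a F).
Proof.
  intros b C [n [A [HA [_ [w [Eb _]]]]]].
  exists (pref a (n + 1)), (relrange G A (segment a n 1)).
  split; [apply Phi_pref, complete_family_forward, HA|].
  apply (f_equal (@length _)) in Eb. rewrite length_app, pref_length in Eb.
  rewrite pref_length. lia.
Qed.

Lemma Phi_word_of : word_of G (Phi G B a F) a.
Proof.
  split; [exact Ha|]. intros [[b C]|] [n [A [_ [_ Hle]]]]; [|destruct Hle].
  destruct Hle as [w [Eb _]].
  exists (length b), C. rewrite <- (pref_eq_app_prefix a n b w Eb). reflexivity.
Qed.

Lemma xi_n_Phi n (A : vset G) : xi_n G B (Phi G B a F) a n A <-> F n A.
Proof.
  split.
  - intros [_ [m [C [HC [[_ [_ HBw]] [w [Em HCA]]]]]]].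
    destruct (pref_eq_app a m n w Em) as [k [-> ->]].
    apply (complete_family_backward k); [|exact HBw].
    eapply complete_family_up; [exact HC | exact HCA | apply Bw_relrange_segment; auto].
  - intros HA. split; [eapply complete_family_Bw; eauto | apply Phi_pref, HA].
Qed.

End CompleteFamily.

Section InfiniteTypeFilter.
Variables (G : LGraph) (B : vset G -> Prop) (xi : ES G -> Prop) (a : nat -> Al G).
Hypotheses (Hacc : accommodating G B) (Hwlr : weakly_left_resolving G B)
  (Hxi : filter_ES G B xi) (Hinf : infinite_type G xi) (Hword : word_of G xi a).

Let Ha : Linf G a := proj1 Hword.

Lemma xi_pref x : xi x -> exists n A, x = Some (pref a n, A).
Proof. apply Hword. Qed.

Lemma xi_inES x : xi x -> inES G B x.
Proof. apply Hxi. Qed.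

Lemma xi_pref_Bw n (A : vset G) : xi (Some (pref a n, A)) -> Bw G B (pref a n) A.
Proof. intros H. apply (xi_inES _ H). Qed.

Lemma xi_pref_inhabited n (A : vset G) : xi (Some (pref a n, A)) -> exists v, A v.
Proof. intros H. apply (xi_inES _ H). Qed.

Lemma xi_deep n : exists k D, n <= k /\ xi (Some (pref a k, D)).
Proof.
  induction n as [|n [k [D [Hk HD]]]].
  - destruct Hxi as [[x Hx] _]. destruct (xi_pref x Hx) as [k [D ->]].
    exists k, D. split; [lia | exact Hx].
  - destruct (Hinf _ _ HD) as [c [C [HC Hlt]]].
    destruct (xi_pref _ HC) as [m [C' E]]. injection E as -> _.
    rewrite !pref_length in Hlt. exists m, C. split; [lia | exact HC].
Qed.

Lemma xi_up n j (A D : vset G) :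
  xi (Some (pref a (n + j), D)) -> subset D (relrange G A (segment a n j)) ->
  Bw G B (pref a n) A -> xi (Some (pref a n, A)).
Proof.
  intros HD HDA HBw. destruct Hxi as [_ [_ [_ [Hup _]]]].
  eapply Hup; [exact HD | | apply leES_pref_segment, HDA].
  apply inES_pref; [exact Ha | exact HBw|].
  destruct (xi_pref_inhabited _ _ HD) as [v Hv].
  eapply relrange_inhabited, HDA, Hv.
Qed.

Lemma xi_common_lower n m (A C : vset G) :
  xi (Some (pref a n, A)) -> xi (Some (pref a m, C)) ->
  exists i i' D, n + i = m + i' /\ xi (Some (pref a (n + i), D)) /\
    subset D (relrange G A (segment a n i)) /\ subset D (relrange G C (segment a m i')).
Proof.
  intros HA HC. destruct Hxi as [_ [_ [_ [_ Hmeet]]]].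
  destruct (Hmeet _ _ HA HC) as [z [Hz [HzA HzC]]].
  destruct (xi_pref _ Hz) as [k [D ->]].
  destruct HzA as [u [Eu HDA]], HzC as [w [Ew HDC]].
  destruct (pref_eq_app a k n u Eu) as [i [-> ->]].
  destruct (pref_eq_app a (n + i) m w Ew) as [i' [Ei ->]].
  exists i, i', D. auto.
Qed.

(* weak left resolvingness is exactly what keeps levels closed under intersection *)
Lemma xi_pref_inter n (A C : vset G) :
  xi (Some (pref a n, A)) -> xi (Some (pref a n, C)) ->
  xi (Some (pref a n, fun v => A v /\ C v)).
Proof.
  intros HA HC. destruct (xi_common_lower n n A C HA HC) as [i [i' [D [Ei [HD [HDA HDC]]]]]].
  assert (i' = i) as -> by lia.
  destruct (xi_pref_Bw _ _ HA) as [HBA HsA]. destruct (xi_pref_Bw _ _ HC) as [HBC _].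
  apply (xi_up n i _ D HD).
  - intros v Hv. destruct i as [|i]; [exact (conj (HDA v Hv) (HDC v Hv))|].
    apply Hwlr; [exact HBA | exact HBC | apply (Lplus_segment G a Ha) |].
    exact (conj (HDA v Hv) (HDC v Hv)).
  - split; [apply Hacc; auto | intros v [Hv _]; auto].
Qed.

Lemma xi_pref_next n (A : vset G) :
  xi (Some (pref a n, A)) -> xi (Some (pref a (S n), relrange G A [a n])).
Proof.
  intros HA. destruct (xi_deep (S n)) as [k [C [Hk HC]]].
  destruct (xi_common_lower n k A C HA HC) as [[|i] [i' [D [Ei [HD [HDA _]]]]]]; [lia|].
  apply (xi_up (S n) i _ D).
  - replace (S n + i) with (n + S i) by lia. exact HD.
  - intros v Hv. apply relrange_app, HDA, Hv.
  - apply (Bw_relrange_letter G B a Ha Hacc), xi_pref_Bw, HA.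
Qed.

Lemma xi_n_filter n : (exists A, xi_n G B xi a n A) ->
  filter_in_Bw G B (pref a n) (xi_n G B xi a n).
Proof.
  intros Hex. split; [exact Hex|]. split; [|split; [|split]].
  - intros A [_ HA]. apply xi_pref_Bw, HA.
  - intros A [_ HA] H0. destruct (xi_pref_inhabited _ _ HA) as [v Hv]. exact (H0 v Hv).
  - intros A C [_ HA] HC HAC. split; [apply HC|].
    apply (xi_up n 0 C A); [rewrite Nat.add_0_r; exact HA | exact HAC | exact HC].
  - intros A C [HBA HA] [HBC HC]. exists (fun v => A v /\ C v).
    split; [split; [apply Hacc; auto | apply xi_pref_inter; auto]|].
    split; intros v [H1 H2]; auto.
Qed.

Lemma xi_n_nonempty n : 0 < n -> exists A, xi_n G B xi a n A.
Proof.
  intros Hn. destruct (xi_deep n) as [k [D [Hk HD]]].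
  assert (HB : B (rword G (pref a n))).
  { destruct n as [|n]; [lia|]. apply Hacc, (Lplus_segment G a Ha 0 n). }
  exists (rword G (pref a n)). split; [exact HB|].
  replace k with (n + (k - n)) in HD by lia.
  apply (xi_up n (k - n) _ D HD).
  - intros v Hv. apply relrange_app. rewrite <- pref_add. apply (xi_pref_Bw _ _ HD), Hv.
  - split; [exact HB | intros v Hv; exact Hv].
Qed.

Lemma xi_n_complete : complete_family G B a (xi_n G B xi a).
Proof.
  split; [|split].
  - destruct (classic (exists A, xi_n G B xi a 0 A)) as [H | H].
    + left. apply xi_n_filter, H.
    + right. intros A HA. apply H. eauto.
  - intros n Hn. apply xi_n_filter, xi_n_nonempty, Hn.
  - intros n A. split.
    + intros [HB HA]. split; [apply xi_pref_Bw, HA|].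
      split; [apply Hacc; [exact HB | apply (Lplus_segment G a Ha n 0)]|].
      apply xi_pref_next, HA.
    + intros [HBw [_ HA]]. split; [apply HBw|].
      apply (xi_up n 1 _ (relrange G A [a n])); [| intros v Hv; exact Hv | exact HBw].
      rewrite Nat.add_1_r. exact HA.
Qed.

Lemma Phi_xi_n x : Phi G B a (xi_n G B xi a) x <-> xi x.
Proof.
  split.
  - intros [n [A [[_ HA] [Hx Hle]]]]. destruct Hxi as [_ [_ [_ [Hup _]]]]. eauto.
  - intros Hx. destruct (xi_pref _ Hx) as [n [A ->]].
    exists n, A. split; [split; [apply (xi_pref_Bw n), Hx | exact Hx]|].
    split; [apply xi_inES, Hx | apply leES_refl].
Qed.

End InfiniteTypeFilter.

(* The countability, nonemptiness and surjectivity hypotheses belong to the paper's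
   standing assumptions on labelled graphs; the correspondence does not use them. *)
Theorem mainTheorem8 (G : LGraph) (B : vset G -> Prop)
  (HV : inhabited (V G)) (HVc : countable (V G)) (HEc : countable (Ed G))
  (Hsurj : forall l : Al G, exists e, lab G e = l)
  (Hacc : accommodating G B) (Hwlr : weakly_left_resolving G B) :
  (forall (a : nat -> Al G) (F : nat -> vset G -> Prop),
      Linf G a -> complete_family G B a F ->
      filter_ES G B (Phi G B a F) /\ infinite_type G (Phi G B a F) /\
      word_of G (Phi G B a F) a /\
      (forall n A, xi_n G B (Phi G B a F) a n A <-> F n A)) /\
  (forall (xi : ES G -> Prop) (a : nat -> Al G),
      filter_ES G B xi -> infinite_type G xi -> word_of G xi a ->
      complete_family G B a (xi_n G B xi a) /\
      (forall x, Phi G B a (xi_n G B xi a) x <-> xi x)).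
Proof.
  split.
  - intros a F Ha HF. split; [|split; [|split]].
    + apply Phi_is_filter; assumption.
    + apply Phi_infinite_type; assumption.
    + apply Phi_word_of; assumption.
    + intros n A. apply xi_n_Phi; assumption.
  - intros xi a Hxi Hinf Hword. split.
    + apply xi_n_complete; assumption.
    + intros x. apply Phi_xi_n; assumption.
Qed.
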